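(* Fix $k\ge2$, $c>0$ and $\zeta_n\in(0,1]$ with $\limsup_n\zeta_n(k-1)c^{k-1}<e$. Let $G=G_n$ be a sequence of asymptotically tree-like, approximately regular $k$-uniform hypergraphs with maximum degree $\Delta$, and let $\mathbf x^\ast$ be the unique fixed point of $F^{G}_{c,\zeta_n}$. Then, uniformly in $v\in V(G)$, $$x_v^\ast=\left(\frac{W((k-1)c^{k-1}\zeta_n)}{(k-1)\zeta_n}\right)^{\frac1{k-1}}+o(1).$$
   Context: Hypergraphs are simple. For a hypergraph $G$ and $S\subseteq V(G)$, $d_G(S)=|\{e\in E(G):S\subseteq e\}|$, $\Delta_\ell(G)=\max_{|S|=\ell}d_G(S)$, $\Delta(G)=\Delta_1(G)$ the maximum degree, $\delta(G)$ the minimum degree, and $\Gamma(G)$ is the maximum over distinct $v,v'$ of the number of $(k-1)$-sets $S$ with $S\cup\{v\},S\cup\{v'\}\in E(G)$. A sequence $(G_n)$ of $k$-uniform hypergraphs is asymptotically tree-like if, with $G=G_n$, $\Delta=\Delta(G)$, as $n\to\infty$: (1) $\Delta\to\infty$; (2) $\Delta_\ell(G)=o(\Delta^{\frac{k-\ell}{k-1}})$ for each $\ell\in\{2,\dots,k-1\}$; (3) $\Gamma(G)=o(\Delta)$; (4) $|E(G)|/|V(G)|=\Omega(\Delta)$. It is approximately regular if also $\delta(G)=(1-o(1))\Delta(G)$. $(F^G_{c,\zeta}(\mathbf x))_v=c\exp\left(-\frac{\zeta}{\Delta}\sum_{e\ni v}\prod_{u\in e\setminus\{v\}}x_u\right)$.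 $W$ is the Lambert $W$ function. *)

From HB Require Import structures.
From mathcomp Require Import all_boot all_order all_algebra.
From mathcomp Require Import all_classical all_reals all_analysis.
Set Implicit Arguments. Unset Strict Implicit. Unset Printing Implicit Defensive.
Import Order.TTheory GRing.Theory Num.Theory.
Import numFieldNormedType.Exports.
Local Open Scope classical_set_scope.
Local Open Scope ring_scope.

Definition uniform (V : finType) (k : nat) (E : {set {set V}}) : Prop :=
  forall e, e \in E -> #|e| = k.

Definition hdeg (V : finType) (E : {set {set V}}) (S : {set V}) : nat :=
  #|[set e in E | S \subset e]|.

Definition hDelta_l (V : finType) (E : {set {set V}}) (l : nat) : nat :=
  \max_(S : {set V} | #|S| == l) hdeg E S.

Definition hDelta (V : finType) (E : {set {set V}}) : nat := hDelta_l E 1.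

(* delta(G) = minimum degree (the seed Delta(G) is irrelevant when V is nonempty) *)
Definition hdelta (V : finType) (E : {set {set V}}) : nat :=
  \big[minn/hDelta E]_(v : V) hdeg E [set v].

Definition hGamma (V : finType) (k : nat) (E : {set {set V}}) : nat :=
  \max_(p : V * V | p.1 != p.2)
     #|[set S : {set V} | (#|S| == k.-1) && (p.1 |: S \in E) && (p.2 |: S \in E)]|.

Definition asymp_tree_like (R : realType) (k : nat) (V : nat -> finType)
    (E : forall n, {set {set V n}}) : Prop :=
  [/\
      ((hDelta (E n))%:R : R) @[n --> \oo] --> +oo,
      (forall l : nat, (2 <= l)%N -> (l <= k.-1)%N ->
         ((hDelta_l (E n) l)%:R /
            (((hDelta (E n))%:R : R) `^ ((k - l)%:R / (k.-1)%:R)))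
           @[n --> \oo] --> (0 : R)),
      ((hGamma k (E n))%:R / ((hDelta (E n))%:R : R)) @[n --> \oo] --> 0
    &
      exists2 C : R, 0 < C &
        \forall n \near \oo,
          C * (hDelta (E n))%:R <= (#|E n|)%:R / (#|V n|)%:R ].

Definition approx_regular (R : realType) (V : nat -> finType)
    (E : forall n, {set {set V n}}) : Prop :=
  ((hdelta (E n))%:R / ((hDelta (E n))%:R : R)) @[n --> \oo] --> (1 : R).

Definition Fmap (R : realType) (V : finType) (E : {set {set V}}) (c zeta : R)
    (x : V -> R) (v : V) : R :=
  c * expR (- (zeta / (hDelta E)%:R) *
              \sum_(e in E | v \in e) \prod_(u in e :\ v) x u).

Definition lambertW (R : realType) (x : R) : R :=
  xget 0 [set w : R | -1 <= w /\ w * expR w = x].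

From HB Require Import structures.
From mathcomp Require Import all_boot all_order all_algebra.
From mathcomp Require Import all_classical all_reals all_analysis.
From mathcomp Require Import ring lra.
Import Order.TTheory GRing.Theory Num.Theory.
Import numFieldNormedType.Exports.
Local Open Scope classical_set_scope.
Local Open Scope ring_scope.

(* Write n = k - 1, z = zeta, r = delta / Delta, and let m <= M be the extreme
   coordinates of the fixed point x.  Bounding the sum over the edges at a vertex
   between delta m^n and Delta M^n in the fixed-point equation gives
   M <= c exp(-z r m^n) and m >= c exp(-z M^n); with p = n z m^n, q = n z M^n
   and a = n z c^n this reads  q <= a exp(-r p)  and  p >= a exp(-q).
   For a < e the map t |-> a exp(-t) composed with itself is a contraction of
   ratio a/e whose fixed point is w = W(a), so p, q and every n z x_v^n lie within
   O(1 - r) of w; taking n-th roots, x_v is within O(1 - r) of (w / (n z))^(1/n)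
   uniformly in v.  Approximate regularity says r -> 1. *)

Set Implicit Arguments.
Unset Strict Implicit.
Unset Printing Implicit Defensive.

Lemma limn_sup_lt_near (R : realType) (u : R^nat) (B l : R) :
  (forall n, 0 <= u n <= B) -> limn_sup u < l -> \forall n \near \oo, u n < l.
Proof.
move=> u_bnd; have u_bounded : bounded_fun (u : R^o^nat).
  exists B; split; first by rewrite num_real.
  move=> C BC n _ /=; have /andP[u0 uB] := u_bnd n.
  by rewrite ger0_norm // ltW // (le_lt_trans uB BC).
rewrite limn_supE // => /inf_lt[|_ [N _ <-] supsN_lt]; first by exists (sups u 0), 0%N.
exists N => // n /= Nn; apply: le_lt_trans supsN_lt.
apply: ub_le_sup; last by exists n.
exact/has_ubound_sdrop/bounded_fun_has_ubound.
Qed.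

Lemma lambertWP (R : realType) (a : R) : 0 < a ->
  0 < lambertW a /\ lambertW a * expR (lambertW a) = a.
Proof.
move=> a_gt0.
have Wdef : exists w : R, -1 <= w /\ w * expR w = a.
  have wexp_cont : {within `[0, a], continuous (fun t : R => t * expR t)}.
    apply: continuous_subspaceT => t.
    by apply: continuousM; [exact: cvg_id | exact: continuous_expR].
  have a_between : Num.min (0 * expR 0) (a * expR a) <= a <= Num.max (0 * expR 0) (a * expR a).
    rewrite mul0r ge_min le_max ltW //=; apply/orP; right.
    by rewrite -[X in X <= _]mulr1 ler_pM2l // -expR0 ler_expR ltW.
  have [w /[!in_itv] /= /andP[w_ge0 _] wK] := IVT (ltW a_gt0) wexp_cont a_between.
  by exists w; split => //; apply: le_trans w_ge0; rewrite lerN10.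
have [_ WK] := xgetPex 0 Wdef; rewrite /lambertW; split => //.
rewrite ltNge; apply/negP => W_le0.
by move: a_gt0; rewrite -WK ltNge mulr_le0_ge0 ?expR_ge0.
Qed.

Lemma mulr_expRN_le (R : realType) (s : R) : s * expR (- s) <= expR (-1).
Proof.
have := expR_ge1Dx (s - 1); rewrite addrC subrK expRD => s_le.
have -> : expR (-1) = expR s * expR (-1) * expR (- s).
  by rewrite mulrAC -expRD subrr expR0 mul1r.
by rewrite ler_pM2r ?expR_gt0.
Qed.

Lemma expRN_mul_subr_le (R : realType) (r s : R) : 0 <= r <= 1 -> 0 <= s ->
  expR (- (r * s)) - expR (- s) <= (1 - r) * s.
Proof.
move=> /andP[r_ge0 r_le1] s_ge0.
have rs_ge0 : 0 <= (1 - r) * s by rewrite mulr_ge0 // subr_ge0.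
have -> : expR (- s) = expR (- (r * s)) * expR (- ((1 - r) * s)).
  by rewrite -expRD; congr expR; ring.
rewrite -[X in X - _]mulr1 -mulrBr -[leRHS]mul1r.
apply: ler_pM; rewrite ?expR_ge0 ?subr_ge0 //.
- by rewrite -[leRHS]expR0 ler_expR oppr_le0.
- by rewrite -[leRHS]expR0 ler_expR oppr_le0 mulr_ge0.
- by have := expR_ge1Dx (- ((1 - r) * s)); lra.
Qed.

Lemma subr_expRN1_gt0 (R : realType) (A : R) : A < expR 1 -> 0 < 1 - A * expR (-1).
Proof.
have e_inv : expR 1 * expR (-1) = 1 :> R by rewrite expRN mulfV ?gt_eqF ?expR_gt0.
by move=> A_lt_e; rewrite subr_gt0 -[ltRHS]e_inv ltr_pM2r ?expR_gt0.
Qed.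

Lemma is_derive1_comp (R : realType) (f g : R -> R) (x df dg : R) :
  is_derive x 1 f df -> is_derive (f x) 1 g dg -> is_derive x 1 (g \o f) (dg * df).
Proof.
move=> [f_der <-] [g_der <-]; apply: DeriveDef.
  by apply/derivable1_diffP/differentiable_comp; exact/derivable1_diffP.
by rewrite -derive1E derive1_comp // !derive1E.
Qed.

Lemma is_derive_mulr_expRN (R : realType) (b t : R) :
  is_derive t 1 (fun s : R => b * expR (- s)) (- (b * expR (- t))).
Proof.
have := @is_deriveZ R R^o R^o (expR \o -%R) b t 1 _
  (is_derive1_comp (is_deriveNid t 1) (is_derive_expR (- t))).
have -> : b \*: (expR \o -%R) = (fun s : R => b * expR (- s)) :> (R^o -> R^o) by [].
by move/is_derive_eq; apply; rewrite /= mulrN1 scalerN.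
Qed.

(* The derivative of t |-> a exp(-a exp(-t)) is a s exp(-s) with s = a exp(-t),
   which is at most a / e. *)
Lemma expRN_iter_lipschitz (R : realType) (a w q : R) : 0 < a -> w <= q ->
  a * expR (- (a * expR (- q))) - a * expR (- (a * expR (- w)))
    <= a * expR (-1) * (q - w).
Proof.
move=> a_gt0 wq.
pose F t := a * expR (- (a * expR (- t))) - a * expR (-1) * t.
pose dF t := - (a * expR (- (a * expR (- t)))) * - (a * expR (- t)) - a * expR (-1).
have F_der t : is_derive (t : R^o) (1 : R^o) (F : R^o -> R^o) (dF t).
  have := is_deriveB (is_derive1_comp (is_derive_mulr_expRN a t)
                        (is_derive_mulr_expRN a (a * expR (- t))))
    (@is_deriveZ R R^o R^o id (a * expR (-1)) t 1 _ (is_derive_id t 1)).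
  by move/is_derive_eq; apply; rewrite /dF; congr (_ - _); exact: mulr1.
have F_cont : {within `[w, q], continuous F}.
  apply: continuous_subspaceT => t; have [F_derivable _] := F_der t.
  exact/differentiable_continuous/derivable1_diffP.
have [t _ FqFw] := MVT_segment wq (fun t _ => F_der t) F_cont.
have dF_le0 : dF t <= 0.
  rewrite /dF mulrNN subr_le0 -mulrA ler_pM2l // mulrC.
  exact: mulr_expRN_le.
have : F q - F w <= 0 by rewrite FqFw mulr_le0_ge0 // subr_ge0.
by rewrite /F; lra.
Qed.

Section NearLambertW.
Variables (R : realType) (a A r w : R).
Hypotheses (a_gt0 : 0 < a) (a_le_A : a <= A) (A_lt_e : A < expR 1).
Hypotheses (r_ge0 : 0 <= r) (r_le1 : r <= 1).
Hypotheses (w_gt0 : 0 < w) (wK : w * expR w = a).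

Let L := A * expR (-1).
Let D := (1 - r) * a ^+ 2 / (1 - L).

Let w_fixed : a * expR (- w) = w.
Proof. by rewrite -wK -mulrA -expRD subrr expR0 mulr1. Qed.

Let w_le_a : w <= a.
Proof.
have e_w_ge1 : 1 <= expR w by rewrite -expR0 ler_expR ltW.
by rewrite -{1}wK; apply: ler_peMr (ltW w_gt0) e_w_ge1.
Qed.

Let subL_gt0 : 0 < 1 - L. Proof. exact: subr_expRN1_gt0. Qed.

Let D_ge0 : 0 <= D.
Proof. by rewrite /D divr_ge0 ?(ltW subL_gt0) // mulr_ge0 ?sqr_ge0 // subr_ge0. Qed.

Lemma ub_near_lambertW (p q : R) : 0 <= q ->
  q <= a * expR (- (r * p)) -> a * expR (- q) <= p -> q <= w + D.
Proof.
move=> q_ge0 q_le p_ge.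
have [q_le_w|w_lt_q] := leP q w; first by rewrite (le_trans q_le_w) ?lerDl.
set s := a * expR (- q) in p_ge.
have s_ge0 : 0 <= s by rewrite mulr_ge0 ?expR_ge0 ?ltW.
have s_le_a : s <= a.
  by rewrite -[leRHS]mulr1 ler_pM2l // -[leRHS]expR0 ler_expR oppr_le0.
have q_le_rs : q <= a * expR (- (r * s)).
  by apply: le_trans q_le _; rewrite ler_pM2l // ler_expR lerN2 ler_wpM2l.
have regularity_gap : a * expR (- (r * s)) - a * expR (- s) <= (1 - r) * a ^+ 2.
  rewrite -mulrBr expr2 [leRHS]mulrCA ler_pM2l //.
  apply: le_trans (expRN_mul_subr_le _ s_ge0) _; first by rewrite r_ge0 r_le1.
  by rewrite ler_wpM2l ?subr_ge0.
have contraction : a * expR (- s) - w <= L * (q - w).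
  have := expRN_iter_lipschitz a_gt0 (ltW w_lt_q); rewrite -/s !w_fixed => /le_trans.
  apply; apply: ler_wpM2r; first by rewrite subr_ge0 ltW.
  by apply: ler_wpM2r; rewrite ?expR_ge0.
rewrite -lerBlDl ler_pdivlMr //; nra.
Qed.

Lemma lb_near_lambertW (p q : R) :
  q <= w + D -> a * expR (- q) <= p -> w - w * D <= p.
Proof.
move=> q_le p_ge.
have : a * expR (- (w + D)) <= p.
  by apply: le_trans p_ge; rewrite ler_pM2l // ler_expR lerN2.
rewrite opprD expRD mulrA w_fixed; apply: le_trans.
by have := ler_wpM2l (ltW w_gt0) (expR_ge1Dx (- D)); rewrite mulrDr mulr1 mulrN.
Qed.

Lemma dist_lambertW_le (p q s : R) : 0 <= q ->
  q <= a * expR (- (r * p)) -> a * expR (- q) <= p -> p <= s <= q ->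
  `|s - w| <= (1 + a) * D.
Proof.
move=> q_ge0 q_le p_ge /andP[p_le_s s_le_q].
have q_ub := ub_near_lambertW q_ge0 q_le p_ge.
have p_lb := lb_near_lambertW q_ub p_ge.
have wD_le : w * D <= a * D by rewrite ler_wpM2r.
have D_nneg := D_ge0.
have aD_ge0 : 0 <= a * D := mulr_ge0 (ltW a_gt0) D_nneg.
have lower : - ((1 + a) * D) <= s - w by lra.
have upper : s - w <= (1 + a) * D by lra.
by rewrite ler_norml lower upper.
Qed.

End NearLambertW.

Lemma normB_le_exprB (R : realFieldType) (n : nat) (l X Y : R) : (0 < n)%N ->
  0 < l -> l <= X -> 0 <= Y -> `|X - Y| <= `|X ^+ n - Y ^+ n| / l ^+ n.-1.
Proof.
case: n => // n _ l_gt0 l_le_X Y_ge0; have X_gt0 := lt_le_trans l_gt0 l_le_X.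
have tail_ge0 : 0 <= \sum_(i < n) X ^+ (n - bump 0 i) * Y ^+ bump 0 i.
  by apply: sumr_ge0 => i _; rewrite mulr_ge0 ?exprn_ge0 // ltW.
have Xn_le : X ^+ n <= `|\sum_(i < n.+1) X ^+ (n - i) * Y ^+ i|.
  rewrite big_ord_recl /= subn0 expr0 mulr1 ger0_norm ?lerDl //.
  by rewrite addr_ge0 // exprn_ge0 // ltW.
have ln_le_Xn : l ^+ n <= X ^+ n.
  by apply: lerXn2r l_le_X; rewrite nnegrE ltW.
rewrite ler_pdivlMr ?exprn_gt0 //= subrXX normrM.
by apply: ler_wpM2l => //; apply: le_trans Xn_le.
Qed.

Lemma hdelta_le_hdeg (V : finType) (E : {set {set V}}) (v : V) :
  (hdelta E <= hdeg E [set v])%N.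
Proof. by rewrite /hdelta -minEnat -leEnat bigmin_le. Qed.

Lemma hdelta_le_hDelta (V : finType) (E : {set {set V}}) : (hdelta E <= hDelta E)%N.
Proof. by rewrite /hdelta -minEnat -leEnat bigmin_le_id. Qed.

Lemma hdeg_le_hDelta (V : finType) (E : {set {set V}}) (v : V) :
  (hdeg E [set v] <= hDelta E)%N.
Proof. by apply: (@leq_bigmax_cond _ (fun S : {set V} => #|S| == 1%N)); rewrite cards1. Qed.

Lemma approx_regular_hDelta_gt0 (R : realType) (V : nat -> finType)
    (E : forall n, {set {set V n}}) :
  approx_regular R E -> \forall n \near \oo, (0 < hDelta (E n))%N.
Proof.
move=> /cvgr_gt/(_ _ ltr01); apply: filterS => n; rewrite lt0n.
by apply: contraTneq => ->; rewrite invr0 mulr0 ltxx.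
Qed.

Lemma sum_edge_prod_bounds (R : numDomainType) (V : finType) (k : nat)
    (E : {set {set V}}) (x : V -> R) (m M : R) (v : V) :
  uniform k E -> (forall u, m <= x u <= M) -> 0 <= m ->
  m ^+ k.-1 *+ hdeg E [set v] <= \sum_(e in E | v \in e) \prod_(u in e :\ v) x u
    <= M ^+ k.-1 *+ hdeg E [set v].
Proof.
move=> E_unif x_bnd m_ge0.
have -> : \sum_(e in E | v \in e) \prod_(u in e :\ v) x u =
          \sum_(e in [set e in E | [set v] \subset e]%SET) \prod_(u in e :\ v) x u.
  by apply: eq_bigl => e; rewrite !inE finset.sub1set.
have card_link e : e \in [set e in E | [set v] \subset e]%SET -> #|e :\ v| = k.-1.
  rewrite inE finset.sub1set => /andP[eE ve].
  by rewrite -(E_unif e eE) (cardsD1 v e) ve.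
rewrite /hdeg -!sumr_const; apply/andP; split; apply: ler_sum => e e_link;
  rewrite -(card_link e e_link) -prodr_const; apply: ler_prod => u _;
  have /andP[m_le M_ge] := x_bnd u.
- by rewrite m_ge0 m_le.
- by rewrite M_ge (le_trans m_ge0 m_le).
Qed.

Lemma exprMn_expRN (R : realType) (n : nat) (c t : R) :
  (c * expR (- t)) ^+ n = c ^+ n * expR (- (n%:R * t)).
Proof. by rewrite exprMn -expRM_natl mulrN. Qed.

Lemma mulr_exprn_le_expRN (R : realType) (n : nat) (b c t y : R) :
  0 <= b -> 0 <= y -> y <= c * expR (- t) ->
  b * y ^+ n <= b * c ^+ n * expR (- (n%:R * t)).
Proof.
move=> b_ge0 y_ge0 y_le; rewrite -mulrA -exprMn_expRN ler_wpM2l //.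
by apply: (lerXn2r _ _ _ y_le); rewrite nnegrE // (le_trans y_ge0 y_le).
Qed.

Lemma mulr_expRN_le_exprn (R : realType) (n : nat) (b c t y : R) :
  0 <= b -> 0 <= c -> c * expR (- t) <= y ->
  b * c ^+ n * expR (- (n%:R * t)) <= b * y ^+ n.
Proof.
move=> b_ge0 c_ge0 y_ge; rewrite -mulrA -exprMn_expRN ler_wpM2l //.
have lb_ge0 : 0 <= c * expR (- t) by rewrite mulr_ge0 ?expR_ge0.
by apply: (lerXn2r _ _ _ y_ge); rewrite nnegrE // (le_trans lb_ge0 y_ge).
Qed.

Section HypergraphFixedPoint.
Variables (R : realType) (V : finType) (n : nat) (E : {set {set V}}).
Variables (c z : R) (x : V -> R).
Hypotheses (n_gt0 : (0 < n)%N) (c_gt0 : 0 < c) (z_gt0 : 0 < z).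
Hypotheses (E_unif : uniform n.+1 E) (Delta_gt0 : (0 < hDelta E)%N).
Hypothesis x_fix : forall v, x v = Fmap E c z x v.

Let r : R := (hdelta E)%:R / (hDelta E)%:R.
Let a : R := n%:R * c ^+ n * z.
Let b : R := n%:R * z.

Let a_gt0 : 0 < a. Proof. by rewrite !mulr_gt0 ?ltr0n ?exprn_gt0. Qed.
Let b_gt0 : 0 < b. Proof. by rewrite mulr_gt0 ?ltr0n. Qed.
Let r_ge0 : 0 <= r. Proof. by rewrite divr_ge0 ?ler0n. Qed.
Let r_le1 : r <= 1.
Proof. by rewrite ler_pdivrMr ?ltr0n // mul1r ler_nat hdelta_le_hDelta. Qed.

Lemma Fmap_fixed_gt0 v : 0 < x v.
Proof. by rewrite x_fix mulr_gt0 ?expR_gt0. Qed.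

Lemma Fmap_fixed_ub (m M : R) : (forall u, m <= x u <= M) -> 0 <= m ->
  forall v, x v <= c * expR (- (z * r * m ^+ n)).
Proof.
move=> x_bnd m_ge0 v; rewrite x_fix /Fmap ler_pM2l // ler_expR mulNr lerN2.
have /andP[S_ge _] := sum_edge_prod_bounds v E_unif x_bnd m_ge0.
have delta_le : (hdelta E)%:R <= (hdeg E [set v])%:R :> R.
  by rewrite ler_nat hdelta_le_hdeg.
have -> : z * r * m ^+ n = z / (hDelta E)%:R * (m ^+ n * (hdelta E)%:R).
  by rewrite /r; ring.
apply: ler_wpM2l; first by rewrite divr_ge0 ?ler0n // ltW.
apply: le_trans S_ge; rewrite -[leRHS]mulr_natr.
by rewrite ler_wpM2l ?exprn_ge0.
Qed.

Lemma Fmap_fixed_lb (M : R) : (forall u, x u <= M) ->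
  forall v, c * expR (- (z * M ^+ n)) <= x v.
Proof.
move=> x_le v; have x_bnd u : 0 <= x u <= M by rewrite x_le (ltW (Fmap_fixed_gt0 u)).
have M_ge0 : 0 <= M := le_trans (ltW (Fmap_fixed_gt0 v)) (x_le v).
rewrite [in leRHS]x_fix /Fmap ler_pM2l // ler_expR mulNr lerN2.
have /andP[_ S_le] := sum_edge_prod_bounds v E_unif x_bnd (lexx 0).
have deg_le : (hdeg E [set v])%:R <= (hDelta E)%:R :> R.
  by rewrite ler_nat hdeg_le_hDelta.
have -> : z * M ^+ n = z / (hDelta E)%:R * (M ^+ n * (hDelta E)%:R).
  by rewrite mulrA mulrAC divfK // pnatr_eq0 -lt0n.
apply: ler_wpM2l; first by rewrite divr_ge0 ?ler0n // ltW.
apply: (le_trans S_le); rewrite -[leLHS]mulr_natr.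
by rewrite ler_wpM2l ?exprn_ge0.
Qed.

Lemma Fmap_fixed_le v : x v <= c.
Proof.
rewrite x_fix /Fmap -[leRHS]mulr1 ler_pM2l // -[leRHS]expR0 ler_expR mulNr oppr_le0.
rewrite mulr_ge0 ?divr_ge0 ?ler0n ?sumr_ge0 // ?ltW // => e _.
by rewrite prodr_ge0 // => u _; rewrite ltW ?Fmap_fixed_gt0.
Qed.

Lemma Fmap_fixed_scaled_near (A : R) v : a <= A -> A < expR 1 ->
  `|b * x v ^+ n - lambertW a| <= (1 + a) * ((1 - r) * a ^+ 2 / (1 - A * expR (-1))).
Proof.
move=> a_le_A A_lt_e.
have b_ge0 := ltW b_gt0.
have [w_gt0 wK] := lambertWP a_gt0.
have [vm _ min_x] := @arg_minP _ R V v xpredT x isT.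
have [vM _ max_x] := @arg_maxP _ R V v xpredT x isT.
have x_bnd u : x vm <= x u <= x vM by apply/andP; split; [apply: min_x | apply: max_x].
have m_ge0 := ltW (Fmap_fixed_gt0 vm).
apply: (dist_lambertW_le a_gt0 a_le_A A_lt_e r_ge0 r_le1 w_gt0 wK
          (p := b * x vm ^+ n) (q := b * x vM ^+ n)).
- by rewrite mulr_ge0 ?exprn_ge0 // ltW ?Fmap_fixed_gt0.
- have := mulr_exprn_le_expRN n b_ge0 (ltW (Fmap_fixed_gt0 vM))
            (Fmap_fixed_ub x_bnd m_ge0 vM).
  by congr (_ <= _ * expR _); rewrite /a /b; ring.
- have := mulr_expRN_le_exprn n b_ge0 (ltW c_gt0) (Fmap_fixed_lb (fun u => (andP (x_bnd u)).2) vm).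
  by congr (_ * expR _ <= _); rewrite /a /b; ring.
- have x_nneg u : x u \in Num.nneg by rewrite nnegrE ltW ?Fmap_fixed_gt0.
  have /andP[m_le M_ge] := x_bnd v.
  by rewrite !ler_wpM2l ?(lerXn2r n (x_nneg _) (x_nneg _)).
Qed.

Lemma Fmap_fixed_ge (A : R) v : a <= A -> c * expR (- A) <= x v.
Proof.
move=> a_le_A; apply: le_trans (Fmap_fixed_lb Fmap_fixed_le v).
rewrite ler_pM2l // ler_expR lerN2 (le_trans _ a_le_A) //.
have -> : a = z * c ^+ n * n%:R by rewrite /a; ring.
by apply: ler_peMr; rewrite ?ler1n // mulr_ge0 ?exprn_ge0 // ltW.
Qed.

Lemma Fmap_fixed_near_lambertW (A : R) v : a <= A -> A < expR 1 ->
  `|x v - (lambertW a / b) `^ n%:R^-1|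
    <= (1 + A) * A * c ^+ n
       / ((1 - A * expR (-1)) * (c * expR (- A)) ^+ n.-1) * (1 - r).
Proof.
move=> a_le_A A_lt_e.
have [w_gt0 _] := lambertWP a_gt0.
set w := lambertW a in w_gt0 *; set l := c * expR (- A); set L := A * expR (-1).
have l_gt0 : 0 < l by rewrite mulr_gt0 ?expR_gt0.
have subL_gt0 : 0 < 1 - L := subr_expRN1_gt0 A_lt_e.
have Y_powK : ((w / b) `^ n%:R^-1) ^+ n = w / b.
  rewrite -powR_mulrn ?powR_ge0 // -powRrM mulVf ?powRr1 ?pnatr_eq0 -?lt0n //.
  by rewrite divr_ge0 ?ltW.
have := normB_le_exprB n_gt0 l_gt0 (Fmap_fixed_ge v a_le_A) (powR_ge0 (w / b) n%:R^-1).
rewrite Y_powK => /le_trans; apply.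
have -> : x v ^+ n - w / b = (b * x v ^+ n - w) / b by field; rewrite gt_eqF.
rewrite normrM normfV (gtr0_norm b_gt0) ler_pdivrMr ?exprn_gt0 //.
have binv_ge0 : 0 <= b^-1 by rewrite invr_ge0 ltW.
have := ler_wpM2r binv_ge0 (Fmap_fixed_scaled_near v a_le_A A_lt_e).
move/le_trans; apply.
have L_neq0 : 1 - L != 0 by rewrite gt_eqF.
have -> : (1 + a) * ((1 - r) * a ^+ 2 / (1 - L)) / b
          = (1 + a) * a * c ^+ n / (1 - L) * (1 - r).
  by rewrite /a /b; field; rewrite L_neq0 pnatr_eq0 -lt0n n_gt0 gt_eqF.
have -> : (1 + A) * A * c ^+ n / ((1 - L) * l ^+ n.-1) * (1 - r) * l ^+ n.-1
          = (1 + A) * A * c ^+ n / (1 - L) * (1 - r).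
  by field; rewrite L_neq0 expf_neq0 ?gt_eqF.
have P_ge0 : 0 <= c ^+ n / (1 - L) * (1 - r).
  have r_compl : 0 <= 1 - r by rewrite subr_ge0 r_le1.
  by rewrite mulr_ge0 // divr_ge0 ?exprn_ge0 // ltW.
have aa_le : (1 + a) * a <= (1 + A) * A by have := a_gt0; nra.
by have := ler_wpM2r P_ge0 aa_le; rewrite !mulrA.
Qed.

End HypergraphFixedPoint.

Unset Implicit Arguments.

Theorem mainTheorem13 (R : realType) (k : nat) (c : R) (zeta : nat -> R)
    (V : nat -> finType) (E : forall n, {set {set V n}})
    (x : forall n, V n -> R) :
  (2 <= k)%N -> 0 < c ->
  (forall n, 0 < zeta n <= 1) ->
  limn_sup (fun n => zeta n * (k.-1)%:R * c ^+ k.-1) < expR 1 ->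
  (forall n, uniform k (E n)) ->
  asymp_tree_like R k E ->
  approx_regular R E ->
  (* x n is the (unique) fixed point of F^{G_n}_{c, zeta n} *)
  (forall n (v : V n), x n v = Fmap (E n) c (zeta n) (x n) v) ->
  forall eps : R, 0 < eps ->
    \forall n \near \oo, forall v : V n,
      `| x n v - (lambertW ((k.-1)%:R * c ^+ k.-1 * zeta n)
                    / ((k.-1)%:R * zeta n)) `^ ((k.-1)%:R^-1) | < eps.
Proof.
case: k => [|[|n]] // _ c_gt0 zeta_bnd limsup_lt_e E_unif _ E_reg x_fix eps eps_gt0 /=.
set l := limn_sup _ in limsup_lt_e; pose A := (l + expR 1) / 2.
have l_lt_A : l < A by rewrite /A; lra.
have A_lt_e : A < expR 1 by rewrite /A; lra.
have a_le_A : \forall m \near \oo, n.+1%:R * c ^+ n.+1 * zeta m <= A.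
  have B_ge0 : 0 <= n.+1%:R * c ^+ n.+1 by rewrite mulr_ge0 ?exprn_ge0 // ltW.
  have u_bnd m : 0 <= zeta m * n.+1%:R * c ^+ n.+1 <= n.+1%:R * c ^+ n.+1.
    have /andP[z_gt0 z_le1] := zeta_bnd m.
    by rewrite -mulrA mulr_ge0 ?(ltW z_gt0) //= ler_piMl.
  apply: filterS (limn_sup_lt_near u_bnd l_lt_A) => m /ltW.
  by rewrite -mulrA mulrC.
pose K := (1 + A) * A * c ^+ n.+1 / ((1 - A * expR (-1)) * (c * expR (- A)) ^+ n).
have err_lt_eps : \forall m \near \oo, K * (1 - (hdelta (E m))%:R / (hDelta (E m))%:R) < eps.
  have : K * (1 - (hdelta (E m))%:R / (hDelta (E m))%:R) @[m --> \oo] --> K * (1 - 1).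
    by apply: cvgMr; apply: cvgB; [exact: cvg_cst | exact: E_reg].
  by rewrite subrr mulr0 => /cvgr_lt; apply.
near=> m => v; have /andP[zeta_gt0 _] := zeta_bnd m.
have Delta_m : (0 < hDelta (E m))%N by near: m; exact: approx_regular_hDelta_gt0 E_reg.
have a_m : n.+1%:R * c ^+ n.+1 * zeta m <= A by near: m.
apply: le_lt_trans (Fmap_fixed_near_lambertW _ c_gt0 zeta_gt0 (E_unif m) Delta_m
                      (x_fix m) v a_m A_lt_e) _ => //.
by near: m.
Unshelve. all: by end_near.
Qed.
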